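(* Let $G\subseteq\mathrm{GL}_n(\mathbb{R})$ be a finite group and let $H$ be a broad subgroup of $G$. Then every ring homomorphism $\phi:\mathbb{R}[\underline{X}]^G\to\mathbb{R}$ of principal orbit type extends to a ring homomorphism $\tilde\phi:\mathbb{R}[\underline{X}]^H\to\mathbb{R}$.
   Context: $\mathbb{R}[\underline{X}]=\mathbb{R}[X_1,\dots,X_n]$; $\mathbb{R}[\underline{X}]^K$ is the ring of polynomials invariant under a subgroup $K$. An elementary abelian $2$-subgroup $H$ of $G$ is broad if every involution of $G$ is conjugate in $G$ to an element of $H$. Every ring homomorphism $\phi:\mathbb{R}[\underline{X}]^G\to\mathbb{R}$ extends to a homomorphism $\mathbb{R}[\underline{X}]\to\mathbb{C}$, i.e. is evaluation at some point $x\in\mathbb{C}^n$, and these points form a single $G$-orbit. $\phi$ is of principal orbit type if such a point $x$ has trivial stabilizer in $G$. *)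

From HB Require Import structures.
From mathcomp Require Import all_boot all_order all_algebra.
From mathcomp Require Import mpoly.
From mathcomp Require Import complex.
From mathcomp Require Import Rstruct.
From Stdlib Require Import Rdefinitions.

Set Implicit Arguments.
Unset Strict Implicit.
Unset Printing Implicit Defensive.

Import Order.TTheory GRing.Theory Num.Theory.
Local Open Scope ring_scope.

Notation RR := Rdefinitions.R.

(* A finite subgroup of GL_n(R), given by the (finite) list of its elements:
   contains the identity, consists of invertible matrices, closed under
   products (finiteness then gives closure under inverses). *)
Definition is_finite_matrix_group (n : nat) (G : seq 'M[RR]_n) : Prop :=
  [/\ 1%:M \in G,
      (forall g, g \in G -> g \in unitmx) &
      (forall g h, g \in G -> h \in G -> g *m h \in G)].

Definition is_subgroup (n : nat) (H G : seq 'M[RR]_n) : Prop :=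
  is_finite_matrix_group H /\ {subset H <= G}.

Definition is_elem_abelian_2 (n : nat) (H : seq 'M[RR]_n) : Prop :=
  (forall h, h \in H -> h *m h = 1%:M) /\
  (forall h k, h \in H -> k \in H -> h *m k = k *m h).

Definition is_involution (n : nat) (g : 'M[RR]_n) : Prop :=
  g *m g = 1%:M /\ g <> 1%:M.

Definition broad (n : nat) (G H : seq 'M[RR]_n) : Prop :=
  [/\ is_subgroup H G, is_elem_abelian_2 H &
      forall g, g \in G -> is_involution g ->
        exists2 k, k \in G & invmx k *m g *m k \in H].

(* Linear action of a matrix on R[X_1..X_n]: (g.p)(x) = p(g x). *)
Definition mat_act (n : nat) (g : 'M[RR]_n) (p : {mpoly RR[n]}) : {mpoly RR[n]} :=
  p \mPo [tuple (\sum_(j < n) g i j *: 'X_j) | i < n].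

Definition is_invariant (n : nat) (K : seq 'M[RR]_n) (p : {mpoly RR[n]}) : Prop :=
  forall g, g \in K -> mat_act g p = p.

(* phi : R[X]^K -> R is a ring homomorphism; phi is given as a function on
   all polynomials, only its values on K-is_invariant polynomials matter. *)
Definition ring_hom_on_invariants (n : nat) (K : seq 'M[RR]_n)
    (phi : {mpoly RR[n]} -> RR) : Prop :=
  [/\ phi 1 = 1,
      (forall p q, is_invariant K p -> is_invariant K q -> phi (p + q) = phi p + phi q) &
      (forall p q, is_invariant K p -> is_invariant K q -> phi (p * q) = phi p * phi q)].

Definition ceval (n : nat) (x : 'I_n -> RR[i]) (p : {mpoly RR[n]}) : RR[i] :=
  (map_mpoly (real_complex RR) p).@[x].

Definition mat_act_pt (n : nat) (g : 'M[RR]_n) (x : 'I_n -> RR[i]) : 'I_n -> RR[i] :=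
  fun i => \sum_(j < n) real_complex RR (g i j) * x j.

Definition principal_orbit_type (n : nat) (G : seq 'M[RR]_n)
    (phi : {mpoly RR[n]} -> RR) : Prop :=
  exists x : 'I_n -> RR[i],
    (forall p, is_invariant G p -> ceval x p = real_complex RR (phi p)) /\
    (forall g, g \in G -> mat_act_pt g x =1 x -> g = 1%:M).

From HB Require Import structures.
From mathcomp Require Import all_boot all_order all_algebra.
From mathcomp Require Import mpoly complex Rstruct.

(** Since [phi] is real-valued, the conjugate point [conj x] has the same
    G-invariants as [x]; as the invariants of a finite group separate its
    orbits, [conj x = g x] for some [g] in [G].  Then [g^2] fixes [x], so
    [g^2 = 1] because [x] has trivial stabilizer, and [g] is either trivial
    or an involution, hence of the form [k h k^-1] with [h] in [H].  The
    point [y = k^-1 x] satisfies [h y = conj y], so every H-invariant takes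
    a real value at [y], and evaluation at [y] is the required extension:
    G-invariants take the same values at [y] as at [x]. *)

Set Implicit Arguments.
Unset Strict Implicit.
Unset Printing Implicit Defensive.

Import GRing.Theory Num.Theory.
Local Open Scope ring_scope.
Local Open Scope complex_scope.

Lemma conjc_fixed_real (R : rcfType) (z : R[i]) :
  z^* = z -> (complex.Re z)%:C = z.
Proof.
case: z => a b /eqP; rewrite eq_complex /= => /andP [_ /eqP Nb_eq_b].
have /eqP : b *+ 2 = 0 by rewrite mulr2n -{1}Nb_eq_b addNr.
by rewrite mulrn_eq0 /= => /eqP ->.
Qed.

Lemma exists_real_common_nonroot (R : rcfType) (I : eqType) (s : seq I)
    (P : I -> {poly R[i]}) :
  (forall i, i \in s -> P i != 0) ->
  exists t : R, forall i, i \in s -> ~~ root (P i) t%:C.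
Proof.
move=> P_neq0; pose Q := \prod_(i <- s) P i.
have Q_neq0 : Q != 0 by rewrite prodf_seq_neq0; apply/allP => i /P_neq0.
suff [t Qt_neq0] : exists t : R, ~~ root Q t%:C.
  exists t => i si; apply: contra Qt_neq0 => /rootP Pit0.
  by rewrite /root horner_prod (big_rem i) //= Pit0 mul0r.
pose ts := [seq k%:R%:C | k <- iota 0 (size Q)] : seq R[i].
have uniq_ts : uniq ts.
  rewrite map_inj_uniq ?iota_uniq // => k1 k2 /complexI /eqP.
  by rewrite eqr_nat => /eqP.
have [/(max_poly_roots Q_neq0)/(_ uniq_ts)|] := boolP (all (root Q) ts).
  by rewrite size_map size_iota ltnn.
by case/allPn => _ /mapP [k _ ->]; exists k%:R.
Qed.

Section CoordPoly.

Variables (R : comNzRingType) (n : nat).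

Definition coord_poly (w : 'I_n -> R) : {poly R} := \sum_(j < n) w j *: 'X^j.

Lemma coef_coord_poly w (j : 'I_n) : (coord_poly w)`_j = w j.
Proof.
rewrite coef_sum (bigD1 j) //= coefZ coefXn eqxx mulr1 big1 ?addr0 // => k kj.
by rewrite coefZ coefXn eq_sym val_eqE (negPf kj) mulr0.
Qed.

Lemma horner_coord_poly w c : (coord_poly w).[c] = \sum_(j < n) w j * c ^+ j.
Proof.
by rewrite horner_sum; apply: eq_bigr => j _; rewrite hornerZ hornerXn.
Qed.

End CoordPoly.

Section MatrixAction.

Variable n : nat.
Implicit Types (g h : 'M[RR]_n) (x y z : 'I_n -> RR[i]) (p : {mpoly RR[n]}).

HB.instance Definition _ g := GRing.RMorphism.copy (mat_act g)
  (comp_mpoly [tuple (\sum_(j < n) g i j *: 'X_j) | i < n]).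

HB.instance Definition _ x := GRing.RMorphism.copy (ceval x)
  (meval x \o map_mpoly (real_complex RR)).

Definition conjx x : 'I_n -> RR[i] := fun i => (x i)^*.

Lemma mat_act_mul g h p : mat_act g (mat_act h p) = mat_act (h *m g) p.
Proof.
rewrite /mat_act [p \mPo _]comp_mpolyEX raddf_sum [RHS]comp_mpolyEX.
apply: eq_bigr => m _; rewrite /= comp_mpolyZ !comp_mpolyX rmorph_prod.
congr (_ *: _); apply: eq_bigr => i _; rewrite rmorphXn !tnth_mktuple.
congr (_ ^+ _); rewrite raddf_sum /=.
under eq_bigr do
  rewrite comp_mpolyZ comp_mpolyXU -tnth_nth tnth_mktuple scaler_sumr.
rewrite exchange_big /=; apply: eq_bigr => k _.
by rewrite mxE scaler_suml; apply: eq_bigr => j _; rewrite scalerA.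
Qed.

Lemma eq_mat_act_pt g y1 y2 : y1 =1 y2 -> mat_act_pt g y1 =1 mat_act_pt g y2.
Proof. by move=> y12 i; apply: eq_bigr => j _; rewrite y12. Qed.

Lemma mat_act_pt_mul g h x :
  mat_act_pt (g *m h) x =1 mat_act_pt g (mat_act_pt h x).
Proof.
move=> i; rewrite /mat_act_pt.
under eq_bigr do rewrite mxE rmorph_sum mulr_suml.
rewrite exchange_big /=; apply: eq_bigr => k _.
by rewrite mulr_sumr; apply: eq_bigr => j _; rewrite rmorphM mulrA.
Qed.

Lemma mat_act_pt1 x : mat_act_pt 1%:M x =1 x.
Proof.
move=> i; rewrite /mat_act_pt (bigD1 i) //= mxE eqxx mul1r big1 ?addr0 //.
move=> j ji.
by rewrite mxE eq_sym (negPf ji) mul0r.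
Qed.

Lemma mat_act_pt_conj g x : mat_act_pt g (conjx x) =1 conjx (mat_act_pt g x).
Proof.
move=> i; rewrite /conjx /mat_act_pt rmorph_sum; apply: eq_bigr => j _.
by rewrite rmorphM; congr (_ * _); apply/esym/conjc_real.
Qed.

Lemma eq_ceval y1 y2 p : y1 =1 y2 -> ceval y1 p = ceval y2 p.
Proof. exact: meval_eq. Qed.

Lemma ceval_mat_act g x p : ceval x (mat_act g p) = ceval (mat_act_pt g x) p.
Proof.
rewrite /ceval /mat_act map_mpoly_comp; last exact: complexI.
rewrite comp_mpoly_meval; apply: meval_eq => i.
rewrite tnth_map tnth_mktuple [map_mpoly _ _]raddf_sum raddf_sum.
apply: eq_bigr => j _.
by rewrite /= map_mpolyZ map_mpolyX mevalZ mevalXU.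
Qed.

Lemma ceval_conj x p : ceval (conjx x) p = (ceval x p)^*.
Proof.
rewrite /ceval !mevalE rmorph_sum; apply: eq_bigr => m _.
rewrite rmorphM rmorph_prod mcoeff_map_mpoly; congr (_ * _).
  exact/esym/conjc_real.
by apply: eq_bigr => i _; rewrite rmorphXn.
Qed.

Definition powers_form (t : RR) : {mpoly RR[n]} := \sum_(j < n) t ^+ j *: 'X_j.

Lemma ceval_powers_form y t : ceval y (powers_form t) = (coord_poly y).[t%:C].
Proof.
rewrite horner_coord_poly /ceval /powers_form.
rewrite [map_mpoly _ _]raddf_sum raddf_sum; apply: eq_bigr => j _.
by rewrite /= map_mpolyZ map_mpolyX mevalZ mevalXU rmorphXn mulrC.
Qed.

End MatrixAction.

Section Orbits.

Variables (n : nat) (G : seq 'M[RR]_n).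
Hypothesis G_group : is_finite_matrix_group G.
Implicit Types (x z : 'I_n -> RR[i]) (l : {mpoly RR[n]}).

Lemma perm_undup_mulmxr a :
  a \in G -> perm_eq [seq h *m a | h <- undup G] (undup G).
Proof.
have [_ G_unit G_mul] := G_group; move=> aG.
have mulmxr_inj : injective (fun h : 'M[RR]_n => h *m a).
  by move=> h1 h2 /(congr1 (mulmx^~ (invmx a))); rewrite !mulmxK ?G_unit.
have uniq_Ga : uniq [seq h *m a | h <- undup G].
  by rewrite map_inj_uniq ?undup_uniq.
have sub_Ga : {subset [seq h *m a | h <- undup G] <= undup G}.
  by move=> _ /mapP [h hG ->]; rewrite mem_undup G_mul // -(mem_undup G).
have [_ eq_Ga] := uniq_min_size uniq_Ga sub_Ga (eq_leq (esym (size_map _ _))).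
by apply: uniq_perm; rewrite ?undup_uniq.
Qed.

(* [G] is a list that may repeat elements, hence the [undup]. *)
Definition orbit_poly l : {poly {mpoly RR[n]}} :=
  \prod_(h <- undup G) ('X - (mat_act h l)%:P).

Lemma orbit_poly_coef_invariant l k : is_invariant G (orbit_poly l)`_k.
Proof.
move=> a aG; rewrite -coef_map.
apply: (congr1 (fun P : {poly {mpoly RR[n]}} => P`_k)).
transitivity (\prod_(h <- undup G) ('X - (mat_act (h *m a) l)%:P)).
  rewrite rmorph_prod; apply: eq_bigr => h _.
  by rewrite -mat_act_mul; apply: map_polyXsubC.
rewrite -(big_map (mulmx^~ a) xpredT (fun h => 'X - (mat_act h l)%:P)).
exact: perm_big (perm_undup_mulmxr aG).
Qed.

Lemma map_orbit_poly_ceval x l :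
  map_poly (ceval x) (orbit_poly l) =
    \prod_(c <- [seq ceval (mat_act_pt h x) l | h <- undup G]) ('X - c%:P).
Proof.
rewrite big_map rmorph_prod; apply: eq_bigr => h _.
by rewrite -ceval_mat_act; apply: map_polyXsubC.
Qed.

Lemma same_invariants_orbit_value x z l :
  (forall p, is_invariant G p -> ceval z p = ceval x p) ->
  exists2 h, h \in G & ceval z l = ceval (mat_act_pt h x) l.
Proof.
move=> same_xz.
have map_orbit_poly_eq :
    map_poly (ceval z) (orbit_poly l) = map_poly (ceval x) (orbit_poly l).
  apply/polyP => k; rewrite !coef_map; exact/same_xz/orbit_poly_coef_invariant.
have : root (map_poly (ceval z) (orbit_poly l)) (ceval z l).
  rewrite map_orbit_poly_ceval root_prod_XsubC; apply/mapP; exists 1%:M.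
    by rewrite mem_undup; case: G_group.
  exact/esym/eq_ceval/mat_act_pt1.
rewrite map_orbit_poly_eq map_orbit_poly_ceval root_prod_XsubC.
by case/mapP => h; rewrite mem_undup; exists h.
Qed.

Lemma same_invariants_same_orbit x z :
  (forall p, is_invariant G p -> ceval z p = ceval x p) ->
  exists2 g, g \in G & mat_act_pt g x =1 z.
Proof.
move=> same_xz.
(* A real [t] for which [powers_form t] separates [z] from every [h x <> z]. *)
pose moving := [seq h <- G | [exists j, mat_act_pt h x j != z j]].
have [t separating_t] : exists t : RR, forall h, h \in moving ->
    ~~ root (coord_poly (mat_act_pt h x) - coord_poly z) t%:C.
  apply: exists_real_common_nonroot => h; rewrite mem_filter.
  case/andP => /existsP [j hxz_j] _; apply: contraNneq hxz_j.
  move/subr0_eq/(congr1 (fun P : {poly RR[i]} => P`_j)).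
  by rewrite !coef_coord_poly => ->.
have [g gG gx_t] := same_invariants_orbit_value (powers_form n t) same_xz.
have : g \notin moving.
  apply/negP => /separating_t/negP; apply.
  by rewrite rootE hornerD hornerN -!ceval_powers_form gx_t subrr.
rewrite mem_filter gG andbT negb_exists => /forallP gxz.
by exists g => // j; apply/eqP; rewrite -[_ == _]negbK gxz.
Qed.

End Orbits.

Lemma ceval_invariant_real n (K : seq 'M[RR]_n) h y p :
  h \in K -> mat_act_pt h y =1 conjx y -> is_invariant K p ->
  (ceval y p)^* = ceval y p.
Proof.
by move=> hK hy Kp; rewrite -ceval_conj -(eq_ceval p hy) -ceval_mat_act Kp.
Qed.

Lemma Re_ceval_ring_hom n (K : seq 'M[RR]_n) y :
  (forall p, is_invariant K p -> (ceval y p)^* = ceval y p) ->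
  ring_hom_on_invariants K (fun p => complex.Re (ceval y p)).
Proof.
move=> real_y; split => [|p q _ _|p q Kp Kq]; first by rewrite rmorph1.
  by rewrite rmorphD /=; case: (ceval y p) => ? ?; case: (ceval y q).
rewrite rmorphM /= -(conjc_fixed_real (real_y p Kp)).
by rewrite -(conjc_fixed_real (real_y q Kq)) -rmorphM.
Qed.

Lemma broad_conj_fixed_point n (G H : seq 'M[RR]_n) g x :
  is_finite_matrix_group G -> broad G H ->
  g \in G -> g *m g = 1%:M -> mat_act_pt g x =1 conjx x ->
  exists y k h, [/\ k \in G, h \in H,
    mat_act_pt k y =1 x & mat_act_pt h y =1 conjx y].
Proof.
move=> [G1 G_unit _] [[[H1 _ _] _] _ broadGH] gG gg gx.
have [g1 | g_neq1] := eqVneq g 1%:M.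
  exists x, 1%:M, 1%:M; split => //; first exact: mat_act_pt1.
  by rewrite -g1.
have [k kG hH] := broadGH g gG (conj gg (elimN eqP g_neq1)).
exists (mat_act_pt (invmx k) x), k, (invmx k *m g *m k); split => // i.
  by rewrite -mat_act_pt_mul mulmxV ?G_unit // mat_act_pt1.
rewrite -mat_act_pt_mul -!mulmxA mulmxV ?G_unit // mulmx1 mat_act_pt_mul.
by rewrite (eq_mat_act_pt _ gx) mat_act_pt_conj.
Qed.

Theorem lemma3p5 (n : nat) (G H : seq 'M[RR]_n) (phi : {mpoly RR[n]} -> RR) :
  is_finite_matrix_group G ->
  broad G H ->
  ring_hom_on_invariants G phi ->
  principal_orbit_type G phi ->
  exists psi : {mpoly RR[n]} -> RR,
    ring_hom_on_invariants H psi /\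
    (forall p, is_invariant G p -> psi p = phi p).
Proof.
move=> G_group broadGH _ [x [phi_x x_free]].
have conj_same_invariants p : is_invariant G p -> ceval (conjx x) p = ceval x p.
  by move=> Gp; rewrite ceval_conj phi_x // conjc_real.
have [g gG gx] := same_invariants_same_orbit G_group conj_same_invariants.
have gg : g *m g = 1%:M.
  have [_ _ G_mul] := G_group; apply: x_free; first exact: G_mul.
  move=> i; rewrite mat_act_pt_mul (eq_mat_act_pt _ gx) mat_act_pt_conj /conjx.
  by rewrite gx /conjx conjcK.
have [y [k [h [kG hH ky hy]]]] :=
  broad_conj_fixed_point G_group broadGH gG gg gx.
exists (fun p => complex.Re (ceval y p)); split.
  by apply: Re_ceval_ring_hom => p; apply: ceval_invariant_real hH hy.
by move=> p Gp; rewrite -{1}(Gp k kG) ceval_mat_act (eq_ceval p ky) phi_x.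
Qed.
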